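(* Let $A$ be a commutative $\mathbb F_p$-algebra ($p$ a prime), let $B=A[z_1,\ldots,z_n]$ be the polynomial ring in $n$ variables over $A$, and let $a_1,\ldots,a_n\in A$ be a regular sequence in $A$. Let $\mathcal D:B^n\to B$ be the $A$-linear map $\mathcal D(h_1,\ldots,h_n)=\sum_{i=1}^n(\partial_{z_i}h_i-a_ih_i)$. Then the image $\mathrm{Im}\,\mathcal D$ is a Mathieu subspace of $B$ (viewing $B$ as an $\mathbb F_p$-algebra).
   Context: Let $k$ be a field and $R$ a commutative $k$-algebra. A $k$-vector subspace $\mathcal M\subseteq R$ is called a Mathieu subspace of $R$ if for every $f\in R$ the following holds: if $f^m\in\mathcal M$ for all $m\ge 1$, then for every $g\in R$ one has $f^mg\in\mathcal M$ for all sufficiently large $m$. $\partial_{z_i}$ denotes the formal partial derivative with respect to $z_i$ on $B$ (which is $A$-linear). *)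

From HB Require Import structures.
From mathcomp Require Import all_boot all_order all_algebra.
Set Implicit Arguments. Unset Strict Implicit. Unset Printing Implicit Defensive.
Import Order.TTheory GRing.Theory Num.Theory.
Local Open Scope ring_scope.

(* B = A[z_1,...,z_n], realized as iterated univariate polynomials
   A[z_1][z_2]...[z_n] (z_n is the outermost variable). *)
Fixpoint mpoly (A : comNzRingType) (n : nat) : comNzRingType :=
  match n with
  | 0 => A
  | m.+1 => ({poly mpoly A m} : comNzRingType)
  end.

Fixpoint mconst (A : comNzRingType) (n : nat) : A -> mpoly A n :=
  match n return A -> mpoly A n with
  | 0 => fun a => a
  | m.+1 => fun a => (mconst m a)%:P
  end.

(* Formal partial derivative with respect to the variable of index i
   (index i : nat, 0 <= i < n, corresponds to z_(i+1)).  It is A-linear. *)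
Fixpoint mderiv (A : comNzRingType) (n : nat) (i : nat) : mpoly A n -> mpoly A n :=
  match n return mpoly A n -> mpoly A n with
  | 0 => fun _ => 0
  | m.+1 => fun p => if i == m then deriv p else map_poly (@mderiv A m i) p
  end.

Definition in_ideal_first (A : comNzRingType) (n : nat) (a : 'I_n -> A)
    (i : nat) (x : A) : Prop :=
  exists c : 'I_n -> A, x = \sum_(j < n | (j < i)%N) c j * a j.

Definition regular_seq (A : comNzRingType) (n : nat) (a : 'I_n -> A) : Prop :=
  (forall (i : 'I_n) (x : A),
      in_ideal_first a i (a i * x) -> in_ideal_first a i x)
  /\ ~ in_ideal_first a n 1.

(* Mathieu subspace of a commutative F_p-algebra R: M is an F_p-subspace
   (i.e. an additive subgroup, since F_p-scalars are integer multiples)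
   and the Mathieu condition holds. *)
Definition Mathieu_subspace (R : comNzRingType) (M : R -> Prop) : Prop :=
  [/\ M 0,
      (forall x y, M x -> M y -> M (x - y)),
      (forall x y, M x -> M y -> M (x + y)) &
      (forall f : R, (forall m : nat, (1 <= m)%N -> M (f ^+ m)) ->
         forall g : R, exists N : nat, forall m : nat, (N <= m)%N -> M (f ^+ m * g))].

Definition imD (A : comNzRingType) (n : nat) (a : 'I_n -> A) (f : mpoly A n) : Prop :=
  exists h : 'I_n -> mpoly A n,
    f = \sum_(i < n) (mderiv i (h i) - mconst n (a i) * h i).

From HB Require Import structures.
From mathcomp Require Import all_boot all_order all_algebra.
From Stdlib Require Import Setoid.
Import GRing.Theory.
Local Open Scope ring_scope.

(* In characteristic p every derivative of u := f ^+ p vanishes, and u lies in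
   imD a.  An A-linear contraction of B, built variable by variable from
   z^(k + j) |-> j`! a_i^(p-1-j) z^k (p | k, j < p), maps imD a into the
   coefficientwise ideal (a_1^p, ..., a_n^p) and multiplies derivative-free
   polynomials by \prod_i a_i^(p-1).  Hence every coefficient c of u satisfies
   \prod_i a_i^(p-1) c \in (a_i^p), and regularity of the a_i gives
   c \in (a_1, ..., a_n).  By Frobenius, f ^+ (p * p) = u ^+ p then lies in
   (a_1^p, ..., a_n^p) B, and a_i^p B is contained in imD a since mderiv i - a_i
   is inverted on it by a Neumann series that terminates because
   iter p (mderiv i) = 0.  So f ^+ m * g \in imD a for all m >= p * p. *)

Set Implicit Arguments. Unset Strict Implicit. Unset Printing Implicit Defensive.

Section RegularSequences.
Variable A : comNzRingType.
Implicit Types (I J : A -> Prop) (x y z : A) (s : seq A).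

Definition is_ideal I :=
  [/\ I 0, (forall x y, I x -> I y -> I (x + y)) & (forall x y, I y -> I (x * y))].

Definition ideal_eq I J := forall x, I x <-> J x.

Definition ideal0 : A -> Prop := fun x => x = 0.

Definition ideal_add I y : A -> Prop := fun x => exists i t, I i /\ x = i + y * t.

Definition ideal_adds I s := foldl ideal_add I s.

Definition nzd_mod I x := forall z, I (x * z) -> I z.

Fixpoint regular_mod I s :=
  if s is x :: s' then nzd_mod I x /\ regular_mod (ideal_add I x) s' else True.

Lemma is_ideal0 : is_ideal ideal0.
Proof. by split=> [|x y -> ->|x y ->]; rewrite ?addr0 ?mulr0. Qed.

Lemma idealN I x : is_ideal I -> I x -> I (- x).
Proof. by case=> _ _ IM Ix; rewrite -mulN1r; apply: IM. Qed.

Lemma idealB I x y : is_ideal I -> I x -> I y -> I (x - y).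
Proof. by move=> II Ix Iy; have [_ ID _] := II; apply: ID => //; apply: idealN. Qed.

Lemma is_ideal_add I y : is_ideal I -> is_ideal (ideal_add I y).
Proof.
case=> I0 ID IM; split.
- by exists 0, 0; rewrite mulr0 addr0.
- move=> _ _ [i [t [Ii ->]]] [i' [t' [Ii' ->]]]; exists (i + i'), (t + t').
  by split; [apply: ID | rewrite mulrDr addrACA].
- move=> x _ [i [t [Ii ->]]]; exists (x * i), (x * t).
  by split; [apply: IM | rewrite mulrDr mulrCA].
Qed.

Lemma is_ideal_adds I s : is_ideal I -> is_ideal (ideal_adds I s).
Proof. by elim: s I => [|y s IHs] I II //=; apply/IHs/is_ideal_add. Qed.

Lemma ideal_add_base I y x : I x -> ideal_add I y x.
Proof. by move=> Ix; exists x, 0; rewrite mulr0 addr0. Qed.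

Lemma ideal_add_gen I y t : is_ideal I -> ideal_add I y (y * t).
Proof. by case=> I0 _ _; exists 0, t; rewrite add0r. Qed.

Lemma ideal_adds_base I s x : I x -> ideal_adds I s x.
Proof. by elim: s I => [|y s IHs] I Ix //=; apply/IHs/ideal_add_base. Qed.

Lemma ideal_adds_gen I s y t : is_ideal I -> y \in s -> ideal_adds I s (y * t).
Proof.
elim: s I => [|z s IHs] I II //=; rewrite inE => /predU1P[->|ys].
  exact/ideal_adds_base/ideal_add_gen.
exact/IHs/ys/is_ideal_add.
Qed.

Lemma ideal_add_eq I J y : ideal_eq I J -> ideal_eq (ideal_add I y) (ideal_add J y).
Proof. by move=> IJ x; split=> -[i [t [/IJ Ji ->]]]; exists i, t. Qed.

Lemma ideal_adds_eq I J s : ideal_eq I J -> ideal_eq (ideal_adds I s) (ideal_adds J s).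
Proof. by elim: s I J => [|y s IHs] I J IJ //=; apply/IHs/ideal_add_eq. Qed.

Lemma ideal_addC I x y : ideal_eq (ideal_add (ideal_add I x) y) (ideal_add (ideal_add I y) x).
Proof.
suff sub u v z : ideal_add (ideal_add I u) v z -> ideal_add (ideal_add I v) u z.
  by move=> z; split; apply: sub.
move=> [_ [t [[i [t' [Ii ->]]] ->]]].
by exists (i + v * t), t'; split; [exists i, t | rewrite addrAC].
Qed.

Lemma ideal_adds_add I y s : ideal_eq (ideal_adds (ideal_add I y) s) (ideal_add (ideal_adds I s) y).
Proof.
elim: s I => [|z s IHs] I //= x.
by rewrite (ideal_adds_eq s (ideal_addC I y z) x) IHs.
Qed.

Lemma ideal_addsP I s x : ideal_adds I s x <->
  exists i (c : nat -> A), I i /\ x = i + \sum_(j < size s) c j * s`_j.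
Proof.
elim: s I x => [|y s IHs] I x /=.
  split=> [Ix | [i [c [Ii ->]]]]; last by rewrite big_ord0 addr0.
  by exists x, (fun _ => 0); rewrite big_ord0 addr0.
rewrite IHs; split.
- move=> [_ [c [[i [t [Ii ->]]] ->]]].
  exists i, (fun j => if j is j'.+1 then c j' else t); split=> //.
  by rewrite big_ord_recl /= addrA [y * t]mulrC.
- move=> [i [c [Ii ->]]]; exists (i + y * c 0%N), (fun j => c j.+1).
  by split; [exists i, (c 0%N) | rewrite big_ord_recl /= addrA [y * _]mulrC].
Qed.

Lemma nzd_mod_eq I J x : ideal_eq I J -> nzd_mod I x -> nzd_mod J x.
Proof. by move=> IJ Ix z /IJ /Ix /IJ. Qed.

Lemma regular_mod_eq I J s : ideal_eq I J -> regular_mod I s -> regular_mod J s.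
Proof.
elim: s I J => [|y s IHs] I J IJ //= [Iy Is].
by split; [apply: nzd_mod_eq Iy | apply: IHs Is; apply: ideal_add_eq].
Qed.

Lemma regular_modP I s :
  (forall k, (k < size s)%N -> nzd_mod (ideal_adds I (take k s)) s`_k) -> regular_mod I s.
Proof.
elim: s I => [|y s IHs] I nzd_s //=.
by split; [apply: (nzd_s 0%N) | apply: IHs => k; apply: (nzd_s k.+1)].
Qed.

Lemma nzd_modX I x e : nzd_mod I x -> nzd_mod I (x ^+ e).
Proof.
move=> Ix; elim: e => [|e IHe] z; first by rewrite expr0 mul1r.
by rewrite exprS -mulrA => /Ix /IHe.
Qed.

Lemma nzd_mod_swap I x y :
  is_ideal I -> nzd_mod I x -> nzd_mod (ideal_add I x) y -> nzd_mod (ideal_add I y) x.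
Proof.
move=> II Ix Iy z [i [t [Ii xz_def]]].
have /Iy [i' [u [Ii' t_def]]] : ideal_add I x (y * t).
  by exists (- i), z; split; [apply: idealN | rewrite xz_def addKr].
have /Ix Iz : I (x * (z - y * u)).
  rewrite mulrBr xz_def t_def mulrDr [x * (y * u)]mulrCA addrA addrK.
  by case: II => _ ID IM; apply: ID => //; apply: IM.
by exists (z - y * u), u; rewrite subrK.
Qed.

Lemma nzd_mod_adds I x s :
  is_ideal I -> nzd_mod I x -> regular_mod (ideal_add I x) s -> nzd_mod (ideal_adds I s) x.
Proof.
elim: s I => [|y s IHs] I II Ix //= [Iy Is].
apply: IHs; [exact: is_ideal_add | exact: nzd_mod_swap |].
by apply: regular_mod_eq Is; apply: ideal_addC.
Qed.

Lemma nzd_mod_addX I y z e :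
  is_ideal I -> nzd_mod I y -> nzd_mod (ideal_add I y) z -> nzd_mod (ideal_add I (y ^+ e)) z.
Proof.
move=> II Iy Iyz; have [I0 ID IM] := II.
elim: e => [|e IHe] w zw_in; first by exists 0, w; rewrite expr0 mul1r add0r.
have /IHe [i [v [Ii w_def]]] : ideal_add I (y ^+ e) (z * w).
  have [i [t [Ii zw_def]]] := zw_in.
  by exists i, (y * t); rewrite zw_def exprSr mulrA.
have [i0 [t [Ii0 zw_def]]] := zw_in.
have /(nzd_modX Iy) zv_in : I (y ^+ e * (z * v - y * t)).
  suff -> : y ^+ e * (z * v - y * t) = i0 - z * i by apply: idealB => //; apply: IM.
  move: zw_def; rewrite w_def mulrDr => zw_def.
  rewrite mulrBr; have -> : y ^+ e * (z * v) = i0 + y ^+ e.+1 * t - z * i.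
    by rewrite -zw_def addrAC subrr add0r mulrCA.
  by rewrite mulrA -exprSr addrAC addrK.
have /Iyz [i' [u [Ii' v_def]]] : ideal_add I y (z * v).
  by exists (z * v - y * t), t; rewrite subrK.
exists (i + y ^+ e * i'), u; split; first by apply: ID => //; apply: IM.
by rewrite w_def v_def mulrDr -addrA mulrA -exprSr.
Qed.

Lemma regular_mod_addX I y e s :
  is_ideal I -> nzd_mod I y -> regular_mod (ideal_add I y) s ->
  regular_mod (ideal_add I (y ^+ e)) s.
Proof.
elim: s I => [|z s IHs] I II Iy //= [Iyz Is]; split; first exact: nzd_mod_addX.
apply: (regular_mod_eq (ideal_addC I z (y ^+ e))).
apply: IHs; first exact: is_ideal_add.
- by apply: nzd_mod_swap => //; apply: nzd_mod_eq Iyz; apply: ideal_addC.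
- by apply: regular_mod_eq Is; apply: ideal_addC.
Qed.

Lemma regular_modX I e s :
  is_ideal I -> regular_mod I s -> regular_mod I [seq x ^+ e | x <- s].
Proof.
elim: s I => [|y s IHs] I II //= [Iy Is]; split; first exact: nzd_modX.
by apply: IHs; [apply: is_ideal_add | apply: regular_mod_addX].
Qed.

Lemma regular_mod_cancel_prod I s e c :
  is_ideal I -> regular_mod I s ->
  ideal_adds I [seq x ^+ e.+1 | x <- s] (c * \prod_(x <- s) x ^+ e) -> ideal_adds I s c.
Proof.
elim: s I c => [|x s IHs] I c II /=; first by rewrite big_nil mulr1.
move=> [Ix Is]; rewrite big_cons => /ideal_adds_add [i [r [Ji c_def]]].
set J := ideal_adds I _ in Ji.
have JJ : is_ideal J by apply: is_ideal_adds.
have Jx : nzd_mod J x.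
  by apply: nzd_mod_adds => //; apply: regular_modX => //; apply: is_ideal_add.
have /(nzd_modX Jx) Jc : J (x ^+ e * (c * \prod_(y <- s) y ^+ e - x * r)).
  by rewrite mulrBr [x ^+ e * (c * _)]mulrCA c_def mulrA -exprSr addrK.
apply: IHs => //; first exact: is_ideal_add.
by apply/ideal_adds_add; exists (c * \prod_(y <- s) y ^+ e - x * r), r; rewrite subrK.
Qed.

End RegularSequences.

Arguments ideal0 {A}.
Arguments is_ideal0 {A}.

Section MultivariateCalculus.
Variable A : comNzRingType.

Lemma mconstD m : {morph @mconst A m : x y / x + y}.
Proof. by elim: m => [|m IHm] x y //=; rewrite IHm polyCD. Qed.

Lemma mconstM m : {morph @mconst A m : x y / x * y}.
Proof. by elim: m => [|m IHm] x y //=; rewrite IHm polyCM. Qed.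

Lemma mconst0 m : @mconst A m 0 = 0.
Proof. by elim: m => [|m IHm] //=; rewrite IHm. Qed.

Lemma mconst1 m : @mconst A m 1 = 1.
Proof. by elim: m => [|m IHm] //=; rewrite IHm. Qed.

Lemma mconstX m x e : @mconst A m (x ^+ e) = mconst m x ^+ e.
Proof. by elim: e => [|e IHe]; rewrite ?expr0 ?mconst1 // !exprS mconstM IHe. Qed.

Lemma mconstMn m x e : @mconst A m (x *+ e) = mconst m x *+ e.
Proof. by elim: e => [|e IHe]; rewrite ?mulr0n ?mconst0 // !mulrS mconstD IHe. Qed.

Lemma mderiv0 m i : @mderiv A m i 0 = 0.
Proof. by case: m => [|m] //=; case: ifP; rewrite ?deriv0 ?map_poly0. Qed.

Lemma mderivD m i : {morph @mderiv A m i : x y / x + y}.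
Proof.
elim: m => [|m IHm] x y /=; first by rewrite addr0.
case: ifP => _; first by rewrite derivD.
by apply/polyP => k; rewrite coefD !coef_map_id0 ?mderiv0 // coefD IHm.
Qed.

Lemma mderivN m i : {morph @mderiv A m i : x / - x}.
Proof.
elim: m => [|m IHm] x /=; first by rewrite oppr0.
case: ifP => _; first by rewrite derivN.
by apply/polyP => k; rewrite coefN !coef_map_id0 ?mderiv0 // coefN IHm.
Qed.

Lemma mderiv_sum m i (I : Type) (r : seq I) (P : pred I) (F : I -> mpoly A m) :
  mderiv i (\sum_(j <- r | P j) F j) = \sum_(j <- r | P j) mderiv i (F j).
Proof. exact: (big_morph _ (@mderivD m i) (mderiv0 m i)). Qed.

Lemma mderiv_mconstM m i x (y : mpoly A m) : mderiv i (mconst m x * y) = mconst m x * mderiv i y.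
Proof.
elim: m y => [|m IHm] y /=; first by rewrite mulr0.
case: ifP => _; apply/polyP => k; first by rewrite coef_deriv !coefCM coef_deriv mulrnAr.
by rewrite coefCM !coef_map_id0 ?mderiv0 // coefCM IHm.
Qed.

Lemma mderivM m i (x y : mpoly A m) : mderiv i (x * y) = mderiv i x * y + x * mderiv i y.
Proof.
elim: m x y => [|m IHm] x y /=; first by rewrite mul0r mulr0 addr0.
case: ifP => _; first by rewrite derivM.
apply/polyP => k; rewrite coefD !coefM !coef_map_id0 ?mderiv0 // coefM mderiv_sum.
rewrite -big_split /=; apply: eq_bigr => j _.
by rewrite IHm !coef_map_id0 ?mderiv0.
Qed.

Lemma mderivXn m i (x : mpoly A m) k :
  mderiv i (x ^+ k.+1) = (x ^+ k * mderiv i x) *+ k.+1.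
Proof.
elim: k => [|k IHk]; first by rewrite expr1 expr0 mul1r.
rewrite exprS mderivM IHk mulrnAr mulrA -exprS mulrS.
by rewrite [mderiv i x * _]mulrC -!mulrS.
Qed.

Lemma iter_mderiv0 m i j : iter j (@mderiv A m i) 0 = 0.
Proof. by elim: j => [|j IHj] //=; rewrite IHj mderiv0. Qed.

End MultivariateCalculus.

Section PrimeCharacteristic.
Variables (R : nzRingType) (p : nat).
Hypothesis pcharR : p \in [pchar R].

Lemma mulrn_dvd_pchar (x : R) N : (p %| N)%N -> x *+ N = 0.
Proof. by rewrite (dvdn_pcharf pcharR) => /eqP N0; rewrite -mulr_natr N0 mulr0. Qed.

Lemma mulrn_mod_pchar (x : R) N1 N2 : N1 = N2 %[mod p] -> x *+ N1 = x *+ N2.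
Proof.
move=> eqN; rewrite -[x *+ N1]mulr_natr -[x *+ N2]mulr_natr.
by rewrite -(GRing.natr_mod_pchar pcharR N1) eqN GRing.natr_mod_pchar.
Qed.

Lemma mulrn_eq0_pchar (x : R) k : ~~ (p %| k)%N -> x *+ k = 0 -> x = 0.
Proof.
have p_prime := pcharf_prime pcharR.
move=> p_ndvd_k xk0; have /eqP gcd1 : coprime p k by rewrite prime_coprime.
have [c _] := Bezoutl k (prime_gt0 p_prime); rewrite gcd1 => /(mulrn_dvd_pchar x).
by rewrite mulrnDr mulnC mulrnA xk0 mul0rn addr0 mulr1n.
Qed.

End PrimeCharacteristic.

Section MultivariatePrimeCharacteristic.
Variables (A : comNzRingType) (p : nat).
Hypothesis pcharA : p \in [pchar A].

Let p_gt0 : (0 < p)%N := prime_gt0 (pcharf_prime pcharA).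

Lemma mpoly_pchar m : p \in [pchar mpoly A m].
Proof. by elim: m => [|m IHm] //=; rewrite pchar_poly. Qed.

Lemma mderiv_exp_pchar m i (x : mpoly A m) : mderiv i (x ^+ p) = 0.
Proof. by rewrite -(prednK p_gt0) mderivXn prednK // (mulrn_pchar (mpoly_pchar m)). Qed.

Lemma iter_mderiv_pchar m i (x : mpoly A m) : (i < m)%N -> iter p (mderiv i) x = 0.
Proof.
elim: m x => [|m IHm] x //; rewrite ltnS leq_eqVlt => /predU1P[-> | lt_im].
  have iterE j : iter j (mderiv m) x = derivn j x by elim: j => //= j ->; rewrite eqxx.
  apply/polyP => k; rewrite iterE coef_derivn coef0 (mulrn_dvd_pchar (mpoly_pchar m)) //.
  by rewrite -bin_ffact dvdn_mull // dvdn_fact // p_gt0 /=.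
have iterE j : iter j (mderiv i) x = map_poly (iter j (@mderiv A m i)) x.
  elim: j => [|j IHj]; first by rewrite map_poly_id.
  rewrite iterS IHj /= (ltn_eqF lt_im); apply/polyP => k.
  by rewrite !coef_map_id0 ?mderiv0 ?iter_mderiv0.
by apply/polyP => k; rewrite iterE coef0 coef_map_id0 ?iter_mderiv0 ?IHm.
Qed.

End MultivariatePrimeCharacteristic.

Section ImageD.
Variables (A : comNzRingType) (n : nat) (a : 'I_n -> A).

Lemma imD0 : imD a 0.
Proof. by exists (fun _ => 0); rewrite big1 // => i _; rewrite mderiv0 mulr0 subr0. Qed.

Lemma imDD x y : imD a x -> imD a y -> imD a (x + y).
Proof.
move=> [h1 ->] [h2 ->]; exists (fun i => h1 i + h2 i).
by rewrite -big_split; apply: eq_bigr => i _ /=; rewrite mderivD mulrDr opprD addrACA.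
Qed.

Lemma imDN x : imD a x -> imD a (- x).
Proof.
move=> [h ->]; exists (fun i => - h i).
by rewrite -sumrN; apply: eq_bigr => i _ /=; rewrite mderivN mulrN opprD.
Qed.

Lemma imDB x y : imD a x -> imD a y -> imD a (x - y).
Proof. by move=> Ix Iy; apply/imDD/imDN. Qed.

Lemma imD_sum (I : Type) (r : seq I) (P : pred I) (F : I -> mpoly A n) :
  (forall j, P j -> imD a (F j)) -> imD a (\sum_(j <- r | P j) F j).
Proof. by move=> IF; apply: (big_ind (imD a)) => //; [apply: imD0 | apply: imDD]. Qed.

Lemma imD_component (i : 'I_n) h : imD a (mderiv i h - mconst n (a i) * h).
Proof.
exists (fun j => if j == i then h else 0).
rewrite (bigD1 i) //= eqxx big1 ?addr0 // => j /negbTE ->.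
by rewrite mderiv0 mulr0 subr0.
Qed.

Lemma imD_mconstXM p (i : 'I_n) h :
  p \in [pchar A] -> imD a (mconst n (a i ^+ p) * h).
Proof.
move=> pcharA; set al := mconst n (a i).
set T := \sum_(0 <= k < p) al ^+ (p.-1 - k) * iter k (mderiv i) h.
have predE k : (p.-1 - k = p - k.+1)%N by rewrite -subn1 -subnDA add1n.
have DT : mderiv i T - al * T = \sum_(0 <= k < p)
     (al ^+ (p - k.+1) * iter k.+1 (mderiv i) h - al ^+ (p - k) * iter k (mderiv i) h).
  rewrite mderiv_sum mulr_sumr -sumrB; apply: eq_big_nat => k /andP[_ lt_kp].
  rewrite /al -mconstX mderiv_mconstM mconstX iterS predE mulrA -exprS -subSn //.
rewrite telescope_sumr // subn0 subnn expr0 mul1r iter_mderiv_pchar // add0r in DT.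
have -> : mconst n (a i ^+ p) * h = mderiv i (- T) - al * (- T).
  by rewrite mderivN mulrN -opprD DT /al mconstX opprK.
exact: imD_component.
Qed.

End ImageD.

Fixpoint coefs_in (A : comNzRingType) (P : A -> Prop) m : mpoly A m -> Prop :=
  match m return mpoly A m -> Prop with
  | 0 => fun x => P x
  | m'.+1 => fun q => forall k, coefs_in P (q : {poly mpoly A m'})`_k
  end.

Section CoefsIn.
Variables (A : comNzRingType) (J : A -> Prop).
Hypothesis idealJ : is_ideal J.

Lemma coefs_in0 m : coefs_in J (0 : mpoly A m).
Proof. by case: idealJ => J0 _ _; elim: m => [|m IHm] //= k; rewrite coef0. Qed.

Lemma coefs_inD m (x y : mpoly A m) : coefs_in J x -> coefs_in J y -> coefs_in J (x + y).
Proof.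
case: idealJ => _ JD _; elim: m x y => [|m IHm] x y /=; first exact: JD.
by move=> Jx Jy k; rewrite coefD; apply: IHm.
Qed.

Lemma coefs_in_mconstM m x (y : mpoly A m) : J x -> coefs_in J (mconst m x * y).
Proof.
move=> Jx; elim: m y => [|m IHm] y /=; last by move=> k; rewrite coefCM.
by case: idealJ => _ _ JM; rewrite mulrC; apply: JM.
Qed.

End CoefsIn.

Lemma coefs_in_mconstMP (A : comNzRingType) (J : A -> Prop) m x (y : mpoly A m) :
  coefs_in J (mconst m x * y) -> coefs_in (fun c => J (x * c)) y.
Proof. by elim: m y => [|m IHm] y //= Jxy k; apply: IHm; rewrite -coefCM. Qed.

Lemma coefs_in_sub (A : comNzRingType) (I J : A -> Prop) m (x : mpoly A m) :
  (forall c, I c -> J c) -> coefs_in I x -> coefs_in J x.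
Proof. by move=> IJ; elim: m x => [|m IHm] x /=; [apply: IJ | move=> Ix k; apply: IHm]. Qed.

Section Contraction.
Variables (A : comNzRingType) (p : nat).
Hypothesis pcharA : p \in [pchar A].
Variable b : nat -> A.

Let p_gt0 : (0 < p)%N := prime_gt0 (pcharf_prime pcharA).

(* [dproj al] sends z^(k + j), for p | k and j < p, to j`! al^(p-1-j) z^k.
   It maps the image of q |-> q^`() - al * q into al^p times the polynomials
   in z^p, and it multiplies such polynomials by al^(p-1). *)
Definition dproj (R : comNzRingType) (al : R) (q : {poly R}) : {poly R} :=
  \poly_(k < size q) (if (p %| k)%N then
     \sum_(0 <= j < p) q`_(k + j) * (al ^+ (p.-1 - j) *+ j`!) else 0).

Fixpoint mdproj m : mpoly A m -> mpoly A m :=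
  match m return mpoly A m -> mpoly A m with
  | 0 => id
  | m'.+1 => fun q => map_poly (@mdproj m') (dproj (mconst m' (b m')) q)
  end.

Lemma coef_dproj (R : comNzRingType) (al : R) q k : (dproj al q)`_k =
  if (p %| k)%N then \sum_(0 <= j < p) q`_(k + j) * (al ^+ (p.-1 - j) *+ j`!) else 0.
Proof.
rewrite coef_poly; case: ltnP => // le_sk; case: ifP => // _.
by rewrite big1 // => j _; rewrite nth_default ?mul0r // (leq_trans le_sk) ?leq_addr.
Qed.

Lemma mdproj0 m : @mdproj m 0 = 0.
Proof.
elim: m => [|m IHm] //=; apply/polyP => k.
rewrite coef_map_id0 // coef_dproj coef0; case: ifP => _ //.
by rewrite big1 // => j _; rewrite coef0 mul0r.
Qed.

Lemma mdprojD m : {morph @mdproj m : x y / x + y}.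
Proof.
elim: m => [|m IHm] x y //=; apply/polyP => k.
rewrite coefD !coef_map_id0 ?mdproj0 // !coef_dproj; case: ifP => _; last by rewrite mdproj0 addr0.
by rewrite -IHm -big_split; congr mdproj; apply: eq_bigr => j _; rewrite coefD mulrDl.
Qed.

Lemma mdproj_sum m (I : Type) (r : seq I) (P : pred I) (F : I -> mpoly A m) :
  @mdproj m (\sum_(j <- r | P j) F j) = \sum_(j <- r | P j) @mdproj m (F j).
Proof. exact: (big_morph _ (@mdprojD m) (mdproj0 m)). Qed.

Lemma mdproj_mconstM m x y : @mdproj m (mconst m x * y) = mconst m x * @mdproj m y.
Proof.
elim: m y => [|m IHm] y //=; apply/polyP => k.
rewrite coefCM !coef_map_id0 ?mdproj0 // !coef_dproj; case: ifP => _; last by rewrite mdproj0 mulr0.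
rewrite -IHm mulr_sumr; congr mdproj.
by apply: eq_bigr => j _; rewrite coefCM mulrA.
Qed.

Lemma coef_dproj_D m (al : mpoly A m) (q : {poly mpoly A m}) k :
  (dproj al (q^`() - al%:P * q))`_k = al ^+ p * - (if (p %| k)%N then q`_k else 0).
Proof.
rewrite coef_dproj; case: ifP => p_dvd_k; last by rewrite oppr0 mulr0.
pose G j := q`_(k + j) * (al ^+ (p - j) *+ j`!).
have pcharB := mpoly_pchar pcharA m.
have Gp : G p = 0.
  by rewrite /G (mulrn_dvd_pchar pcharB _ (_ : (p %| p`!)%N)) ?mulr0 // dvdn_fact ?p_gt0 /=.
rewrite (@telescope_sumr_eq _ 0 p G) // => [|j /andP[_ lt_jp]].
  by rewrite Gp /G subn0 fact0 mulr1n addn0 sub0r mulrN mulrC.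
rewrite /G coefB coef_deriv coefCM mulrBl.
have predE : (p.-1 - j = p - j.+1)%N by rewrite -subn1 -subnDA add1n.
have succE : (p - j = (p.-1 - j).+1)%N by rewrite -subSn ?prednK // -ltnS prednK.
congr (_ - _).
  rewrite -addnS (mulrn_mod_pchar pcharB _ (_ : k + j.+1 = j.+1 %[mod p])); last first.
    by rewrite -modnDml (eqP p_dvd_k) add0n.
  by rewrite predE mulrnAl !mulrnAr -mulrnA factS mulnC.
by rewrite succE exprS [al * q`_(k + j)]mulrC -mulrA !mulrnAr mulrA.
Qed.

Lemma coef_dproj_map m (al : mpoly A m) (f : mpoly A m -> mpoly A m) (q E : {poly mpoly A m}) k :
  {morph f : x y / x + y} ->
  (forall j y, f (y * (al ^+ (p.-1 - j) *+ j`!)) = f y * (al ^+ (p.-1 - j) *+ j`!)) ->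
  (forall t, E`_t = f q`_t) -> (dproj al E)`_k = f (dproj al q)`_k.
Proof.
move=> fD fM Ef; have f0 : f 0 = 0 by apply: (addrI (f 0)); rewrite -fD !addr0.
rewrite !coef_dproj; case: ifP => _ //.
by rewrite (big_morph f fD f0); apply: eq_bigr => j _; rewrite Ef fM.
Qed.

Lemma coefs_in_mdproj_D (J : A -> Prop) m i (h : mpoly A m) :
  is_ideal J -> (forall k, (k < m)%N -> J (b k ^+ p)) -> (i < m)%N ->
  coefs_in J (mdproj (mderiv i h - mconst m (b i) * h)).
Proof.
move=> idealJ; elim: m i h => [|m IHm] i h // Jb; rewrite ltnS leq_eqVlt.
move=> /predU1P[-> | lt_im] k; rewrite /= coef_map_id0 ?mdproj0 //.
  rewrite eqxx coef_dproj_D -mconstX mdproj_mconstM.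
  by apply: coefs_in_mconstM => //; apply: Jb.
rewrite (ltn_eqF lt_im) (@coef_dproj_map _ _ (fun y => mderiv i y - mconst m (b i) * y) h).
- by apply: IHm => // k' lt_k'm; apply/Jb/ltnW.
- by move=> x y; rewrite mderivD mulrDr opprD addrACA.
- move=> j y; rewrite -mconstX -mconstMn [y * _]mulrC mderiv_mconstM.
  by rewrite [RHS]mulrC mulrBr [_ * (mconst m (b i) * y)]mulrCA.
- by move=> t; rewrite coefB coef_map_id0 ?mderiv0 // coefCM.
Qed.

Lemma mdproj_const m (u : mpoly A m) : (forall i, (i < m)%N -> mderiv i u = 0) ->
  mdproj u = mconst m (\prod_(i < m) b i ^+ p.-1) * u.
Proof.
elim: m u => [|m IHm] u du0; first by rewrite big_ord0 /= mul1r.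
have u'0 : u^`() = 0 by have := du0 m (ltnSn m); rewrite /= eqxx.
have duk0 i k : (i < m)%N -> mderiv i u`_k = 0.
  move=> lt_im; have := du0 i (ltnW lt_im); rewrite /= (ltn_eqF lt_im) => /polyP/(_ k).
  by rewrite coef_map_id0 ?mderiv0 // coef0.
have uk0 k : ~~ (p %| k)%N -> u`_k = 0.
  case: k => [|k] p_ndvd_k; first by rewrite dvdn0 in p_ndvd_k.
  by apply: (mulrn_eq0_pchar (mpoly_pchar pcharA m) p_ndvd_k); rewrite -coef_deriv u'0 coef0.
apply/polyP => k; rewrite /= coefCM coef_map_id0 ?mdproj0 //.
have -> : (dproj (mconst m (b m)) u)`_k = mconst m (b m ^+ p.-1) * u`_k.
  rewrite coef_dproj; case: ifP => p_dvd_k; last by rewrite uk0 ?p_dvd_k // mulr0.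
  rewrite big_ltn // big_nat_cond big1 ?addr0.
    by rewrite addn0 subn0 fact0 mulr1n mconstX mulrC.
  move=> j /andP[/andP[j_gt0 lt_jp] _]; rewrite uk0 ?mul0r //.
  by rewrite dvdn_addr // gtnNdvd.
rewrite mdproj_mconstM IHm; last by move=> i lt_im; apply: duk0.
by rewrite big_ord_recr /= mconstM mulrA [mconst m (b m ^+ _) * _]mulrC.
Qed.

End Contraction.

Section IdealOfSequence.
Variables (A : comNzRingType) (n : nat) (a : 'I_n -> A).

Definition extn (f : 'I_n -> A) (j : nat) : A := if insub j is Some i then f i else 0.

Lemma extnE f (i : 'I_n) : extn f i = f i.
Proof. by rewrite /extn valK. Qed.

Lemma in_ideal_firstE k x : (k <= n)%N ->
  in_ideal_first a k x <-> ideal_adds ideal0 (mkseq (extn a) k) x.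
Proof.
move=> le_kn; rewrite ideal_addsP size_mkseq.
have sumE (c : nat -> A) :
    \sum_(j < k) c j * (mkseq (extn a) k)`_j = \sum_(j < n | (j < k)%N) c j * a j.
  rewrite (eq_bigr (fun j : 'I_k => c j * extn a j)) => [|j _]; last by rewrite nth_mkseq.
  rewrite (big_ord_widen n (fun j => c j * extn a j) le_kn).
  by apply: eq_bigr => j _; rewrite extnE.
split=> [[c ->] | [_ [c [-> ->]]]].
  by exists 0, (extn c); rewrite add0r sumE; split=> //; apply: eq_bigr => j _; rewrite extnE.
by exists (fun j => c j); rewrite add0r sumE.
Qed.

Lemma regular_seq_mod : regular_seq a -> regular_mod ideal0 (mkseq (extn a) n).
Proof.
move=> [a_nzd _]; apply: regular_modP => k; rewrite size_mkseq => lt_kn.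
have -> : take k (mkseq (extn a) n) = mkseq (extn a) k.
  by rewrite /mkseq -map_take take_iota (minn_idPl (ltnW lt_kn)).
rewrite nth_mkseq // => z /in_ideal_firstE-/(_ (ltnW lt_kn)) a_z.
apply/in_ideal_firstE; first exact: ltnW.
by have := a_nzd (Ordinal lt_kn) z; rewrite /= -(extnE a (Ordinal lt_kn)); apply.
Qed.

Definition mideal m (x : mpoly A m) :=
  exists t : 'I_n -> mpoly A m, x = \sum_(i < n) mconst m (a i) * t i.

Lemma mideal0 m : mideal (0 : mpoly A m).
Proof. by exists (fun _ => 0); rewrite big1 // => i _; rewrite mulr0. Qed.

Lemma midealD m (x y : mpoly A m) : mideal x -> mideal y -> mideal (x + y).
Proof.
move=> [t ->] [t' ->]; exists (fun i => t i + t' i).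
by rewrite -big_split; apply: eq_bigr => i _; rewrite mulrDr.
Qed.

Lemma midealMr m (x y : mpoly A m) : mideal x -> mideal (x * y).
Proof.
move=> [t ->]; exists (fun i => t i * y).
by rewrite mulr_suml; apply: eq_bigr => i _; rewrite mulrA.
Qed.

Lemma mideal_polyC m (x : mpoly A m) : mideal x -> mideal (x%:P : mpoly A m.+1).
Proof.
move=> [t ->]; exists (fun i => (t i)%:P).
by rewrite rmorph_sum; apply: eq_bigr => i _; rewrite rmorphM.
Qed.

Lemma mideal_coefs m (u : mpoly A m) :
  coefs_in (ideal_adds ideal0 (mkseq (extn a) n)) u -> mideal u.
Proof.
elim: m u => [|m IHm] u /=.
  move=> /ideal_addsP [_ [c [-> ->]]]; exists (fun i => c i).
  rewrite add0r size_mkseq; apply: eq_bigr => i _.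
  by rewrite nth_mkseq // extnE mulrC.
move=> coefs_u; rewrite -[u]coefK poly_def; apply: big_ind => [||k _].
- exact: mideal0.
- by move=> x y; apply: midealD.
- by rewrite -mul_polyC; apply/midealMr/mideal_polyC/IHm.
Qed.

End IdealOfSequence.

Lemma exp_pchar_sum_mul (R : comNzRingType) p (I : Type) (r : seq I) (c t : I -> R) :
  p \in [pchar R] -> (\sum_(i <- r) c i * t i) ^+ p = \sum_(i <- r) c i ^+ p * t i ^+ p.
Proof.
move=> pcharR; rewrite -(pFrobenius_autE pcharR) rmorph_sum.
by apply: eq_bigr => i _; rewrite rmorphM /= !pFrobenius_autE.
Qed.

Section MathieuProperty.
Variables (A : comNzRingType) (p : nat) (n : nat) (a : 'I_n -> A).
Hypotheses (pcharA : p \in [pchar A]) (a_regular : regular_seq a).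

Let p_gt0 : (0 < p)%N := prime_gt0 (pcharf_prime pcharA).

Lemma mideal_of_imD_const (u : mpoly A n) :
  imD a u -> (forall i, (i < n)%N -> mderiv i u = 0) -> mideal a u.
Proof.
move=> [h u_def] du0; set b := extn a.
set J := ideal_adds ideal0 [seq x ^+ p | x <- mkseq b n].
have idealJ : is_ideal J by apply/is_ideal_adds/is_ideal0.
have Jb k : (k < n)%N -> J (b k ^+ p).
  move=> lt_kn; rewrite -[_ ^+ p]mulr1; apply: ideal_adds_gen; first exact: is_ideal0.
  by apply/map_f/map_f; rewrite mem_iota.
have : coefs_in J (mdproj p b u).
  rewrite u_def mdproj_sum; apply: big_ind => [||i _].
  - exact: coefs_in0.
  - by move=> x y; apply: coefs_inD.
  - by rewrite -(extnE a i); apply: coefs_in_mdproj_D.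
rewrite mdproj_const // => /coefs_in_mconstMP coefs_u.
apply: mideal_coefs; apply: coefs_in_sub coefs_u => c Jc.
apply: (regular_mod_cancel_prod (e := p.-1) is_ideal0 (regular_seq_mod a_regular)).
have iotaE : iota 0 n = index_iota 0 n by rewrite /index_iota subn0.
by rewrite prednK // mulrC /mkseq big_map {2}iotaE big_mkord.
Qed.

Lemma imD_mideal_exp_pcharM (u h : mpoly A n) : mideal a u -> imD a (u ^+ p * h).
Proof.
move=> [t ->]; rewrite exp_pchar_sum_mul ?mpoly_pchar // mulr_suml.
by apply: imD_sum => i _; rewrite -mulrA -mconstX; apply: imD_mconstXM.
Qed.

End MathieuProperty.

Theorem theorem2p2 (p : nat) (A : comNzRingType) (n : nat) (a : 'I_n -> A) :
  p \in [pchar A] ->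
  regular_seq a ->
  Mathieu_subspace (@imD A n a).
Proof.
move=> pcharA a_regular; split; [exact: imD0 | exact: imDB | exact: imDD |].
move=> f f_in g; exists (p * p)%N => m le_m.
have p_gt0 : (0 < p)%N := prime_gt0 (pcharf_prime pcharA).
have fp_in : mideal a (f ^+ p).
  apply: (mideal_of_imD_const pcharA a_regular (f_in p p_gt0)) => i _.
  exact: mderiv_exp_pchar.
by rewrite -(subnKC le_m) exprD exprM -mulrA; exact: imD_mideal_exp_pcharM.
Qed.
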